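(* Let $\mu>0$ and fix $s\in\mathcal{S}$. Suppose the quasi-optimal action-value function is concavely quadratic in the action: $Q^{*}_{\mu}(s,a)=-\alpha_1 a^2+\alpha_2 a+\alpha_3$ for all $a\in\mathbb{R}$, with constants (depending on $s$) $\alpha_1>0$, $\alpha_2,\alpha_3\in\mathbb{R}$. Let $\pi^{*}_{\mu}(\cdot\mid s)$ be the induced policy, i.e. a probability density on $\mathbb{R}$ whose support $\mathcal{W}_s$ (closure of $\{a:\pi^{*}_{\mu}(a\mid s)>0\}$) satisfies $0<\sigma(\mathcal{W}_s)<\infty$ and such that for all $a\in\mathbb{R}$ $$\pi^{*}_{\mu}(a\mid s)=\Big(\frac{Q^{*}_{\mu}(s,a)}{2\mu}-\frac{\int_{\mathcal{W}_s}Q^{*}_{\mu}(s,a')\,da'}{2\mu\,\sigma(\mathcal{W}_s)}+\frac{1}{\sigma(\mathcal{W}_s)}\Big)^{+}.$$ Then $\pi^{*}_{\mu}(\cdot\mid s)$ is a $q$-Gaussian density $$\pi^{*}_{\mu}(a\mid s)=\Big(\frac{3}{2}\Big(\frac{\alpha_1}{12\mu}\Big)^{1/3}-\frac{\alpha_1}{2\mu}\Big(a-\frac{\alpha_2}{2\alpha_1}\Big)^2\Big)^{+},$$ with support $$\mathcal{W}_s=\Big[\frac{\alpha_2-(12\alpha_1^2\mu)^{1/3}}{2\alpha_1},\ \frac{\alpha_2+(12\alpha_1^2\mu)^{1/3}}{2\alpha_1}\Big].$$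
   Context: $\sigma$ denotes Lebesgue measure on $\mathbb{R}$ and $x^{+}=\max(x,0)$. The action space is $\mathcal{A}=\mathbb{R}$. $Q^{*}_{\mu}$ is the quasi-optimal action-value function of a Markov decision process, here assumed to have the stated quadratic form at the state $s$. *)

From HB Require Import structures.
From mathcomp Require Import all_boot all_order all_algebra.
From mathcomp Require Import all_classical all_reals all_analysis.
Set Implicit Arguments. Unset Strict Implicit. Unset Printing Implicit Defensive.
Import Order.TTheory GRing.Theory Num.Theory numFieldNormedType.Exports.
Local Open Scope classical_set_scope.
Local Open Scope ring_scope.

Definition pospart {R : realType} (x : R) : R := Num.max x 0.

Definition Wsupp {R : realType} (p : R -> R) : set R :=
  closure [set a | 0 < p a].

From HB Require Import structures.
From mathcomp Require Import all_boot all_order all_algebra.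
From mathcomp Require Import all_classical all_reals all_analysis.
From mathcomp Require Import ring lra.
Set Implicit Arguments.
Unset Strict Implicit.
Unset Printing Implicit Defensive.
Import Order.TTheory GRing.Theory Num.Theory numFieldNormedType.Exports.
Local Open Scope classical_set_scope.
Local Open Scope ring_scope.

(* Completing the square, the self-consistency equation says that the policy
   is the positive part of a concave parabola [K - beta (a - m)^2] for some
   constant K which the equation itself does not pin down.  Normalisation does:
   if K <= 0 the policy vanishes, and if K = beta r^2 with r > 0 the policy is
   supported on [m - r, m + r] with mass (4/3) beta r^3, so r^3 = 3 / (4 beta).
   The closed forms for the height K and the endpoints m +- r are cube roots of
   this identity. *)

Section Roots.
Variable R : realType.

Lemma powR_expn_inv (y : R) (n : nat) :
  0 <= y -> (0 < n)%N -> (y ^+ n) `^ n%:R^-1 = y.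
Proof.
move=> y0 n0.
by rewrite -powR_mulrn // -powRrM mulfV ?powRr1 // pnatr_eq0 -lt0n.
Qed.

Lemma exists_pmul_sqr (K b : R) :
  0 < K -> 0 < b -> exists2 r, 0 < r & K = b * r ^+ 2.
Proof.
move=> K_gt0 b_gt0; exists (Num.sqrt (K / b)); first by rewrite sqrtr_gt0 divr_gt0.
by rewrite sqr_sqrtr ?divr_ge0 ?(ltW K_gt0) ?(ltW b_gt0) // mulrC divfK // gt_eqF.
Qed.

End Roots.

Section Pospart.
Variable R : realType.

Lemma pospart_eq0 (x : R) : x <= 0 -> pospart x = 0.
Proof. exact: max_r. Qed.

Lemma pospart_gt0 (x : R) : (0 < pospart x) = (0 < x).
Proof. by rewrite /pospart lt_max ltxx orbF. Qed.

Lemma integral_pospart_nonpos (f : R -> R) :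
  (forall x, f x <= 0) ->
  (\int[lebesgue_measure]_(x in setT) (pospart (f x))%:E = 0)%E.
Proof.
move=> f_le0; rewrite (eq_integral (cst 0%E)) ?integral0 // => x _.
by rewrite pospart_eq0.
Qed.

Lemma pospart_quadratic_mass1_gt0 (K b m : R) : 0 <= b ->
  (\int[lebesgue_measure]_(x in setT) (pospart (K - b * (x - m) ^+ 2))%:E = 1)%E ->
  0 < K.
Proof.
move=> b_ge0; apply: contra_eqT; rewrite -leNgt => K_le0.
rewrite integral_pospart_nonpos => [|x]; first by rewrite eqe eq_sym oner_eq0.
by have := sqr_ge0 (x - m); nra.
Qed.

End Pospart.

Section ParabolaCap.
Variable R : realType.
Variables b m r : R.

Definition parabola (x : R) : R := b * (r ^+ 2 - (x - m) ^+ 2).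

Definition parabola_cap (x : R) : R := pospart (parabola x).

Lemma integral_parabola : 0 < r ->
  (\int[lebesgue_measure]_(x in `[(m - r)%R, (m + r)%R]) (parabola x)%:E
    = (4 / 3 * b * r ^+ 3)%:E)%E.
Proof.
move=> r0.
pose F y := b * (r ^+ 2 * (y - m) - (y - m) ^+ 3 / 3).
have dF (x : R) : is_derive x (1 : R) F (parabola x).
  by apply: is_derive_eq; rewrite /parabola /GRing.scale /=; field.
have cF : continuous F.
  by move=> x; apply/differentiable_continuous/derivable1_diffP; case: (dF x).
have cparabola : continuous parabola.
  by move=> x; apply/differentiable_continuous/derivable1_diffP.
have mr : m - r < m + r by lra.
rewrite (@continuous_FTC2 _ _ F _ _ mr).
- by rewrite -EFinB /F; congr (_%:E); field.
- exact: continuous_subspaceT.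
- split; first by move=> x _; case: (dF x).
  + exact/cvg_at_right_filter/cF.
  + exact/cvg_at_left_filter/cF.
- by move=> x _; rewrite derive1E derive_val.
Qed.

Hypotheses (b_gt0 : 0 < b) (r_gt0 : 0 < r).

Lemma parabola_gt0 x : (0 < parabola x) = (`|x - m| < r).
Proof.
rewrite pmulr_rgt0 // subr_gt0 -real_normK ?num_real //.
by rewrite ltr_sqr ?nnegrE ?normr_ge0 ?(ltW r_gt0).
Qed.

Lemma parabola_ge0 x : (0 <= parabola x) = (`|x - m| <= r).
Proof.
rewrite pmulr_rge0 // subr_ge0 -real_normK ?num_real //.
by rewrite ler_sqr ?nnegrE ?normr_ge0 ?(ltW r_gt0).
Qed.

Lemma parabola_cap_gt0 : [set x | 0 < parabola_cap x] = ball m r.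
Proof.
rewrite ball_itv; apply/seteqP; split => x /=;
  by rewrite in_itv /= pospart_gt0 parabola_gt0 ltr_distl.
Qed.

Lemma Wsupp_parabola_cap : Wsupp parabola_cap = `[m - r, m + r]%classic.
Proof. by rewrite /Wsupp parabola_cap_gt0 closure_ballE closed_ball_itv. Qed.

Lemma parabola_cap_patch x :
  (parabola_cap x)%:E
    = ((fun y => (parabola y)%:E) \_ `[m - r, m + r]%classic) x.
Proof.
rewrite patchE /parabola_cap /pospart; case: ifPn.
  by rewrite inE /= in_itv /= -ler_distl -parabola_ge0 => /max_l ->.
rewrite notin_setE /= in_itv /= -ler_distl -parabola_ge0 => /negP.
by rewrite -ltNge => /ltW /max_r ->.
Qed.

Lemma integral_parabola_cap :
  (\int[lebesgue_measure]_(x in setT) (parabola_cap x)%:E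
    = (4 / 3 * b * r ^+ 3)%:E)%E.
Proof.
under eq_integral => x _ do rewrite parabola_cap_patch.
by rewrite -integral_mkcond integral_parabola.
Qed.

Lemma parabola_cap_mass1 :
  (\int[lebesgue_measure]_(x in setT) (parabola_cap x)%:E = 1)%E ->
  r ^+ 3 = 3 / (4 * b).
Proof.
rewrite integral_parabola_cap => -[mass1].
have -> : r ^+ 3 = (4 / 3 * b * r ^+ 3) * (3 / (4 * b)) by field; rewrite gt_eqF.
by rewrite mass1 mul1r.
Qed.

End ParabolaCap.

Theorem theorem2 (R : realType) (mu : R) (Q pi : R -> R)
  (alpha1 alpha2 alpha3 : R) :
  0 < mu ->
  0 < alpha1 ->
  (forall a, Q a = - alpha1 * a ^+ 2 + alpha2 * a + alpha3) ->
  (* pi is a probability density on R *)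
  measurable_fun setT pi ->
  (forall a, 0 <= pi a) ->
  (\int[lebesgue_measure]_(a in setT) (pi a)%:E = 1)%E ->
  (* 0 < sigma(W_s) < oo *)
  (0 < lebesgue_measure (Wsupp pi) < +oo)%E ->
  (* the integral of Q over W_s is a (finite) real number *)
  (\int[lebesgue_measure]_(a in Wsupp pi) (Q a)%:E)%E \is a fin_num ->
  (forall a, pi a =
     pospart (Q a / (2 * mu)
       - fine (\int[lebesgue_measure]_(a' in Wsupp pi) (Q a')%:E)%E
           / (2 * mu * fine (lebesgue_measure (Wsupp pi)))
       + (fine (lebesgue_measure (Wsupp pi)))^-1)) ->
  (forall a, pi a =
     pospart (3 / 2 * (alpha1 / (12 * mu)) `^ (3^-1)
              - alpha1 / (2 * mu) * (a - alpha2 / (2 * alpha1)) ^+ 2))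
  /\
  Wsupp pi =
    `[(alpha2 - (12 * alpha1 ^+ 2 * mu) `^ (3^-1)) / (2 * alpha1),
      (alpha2 + (12 * alpha1 ^+ 2 * mu) `^ (3^-1)) / (2 * alpha1)]%classic.
Proof.
move=> mu_gt0 alpha1_gt0 hQ _ _ pi_mass1 _ _ pi_fix.
set C := fine _ / _ in pi_fix; set D := (fine _)^-1 in pi_fix.
set beta := alpha1 / (2 * mu); set m := alpha2 / (2 * alpha1).
set K := (alpha2 ^+ 2 / (4 * alpha1) + alpha3) / (2 * mu) - C + D.
have beta_gt0 : 0 < beta by rewrite divr_gt0 ?mulr_gt0.
have piE : pi = fun a => pospart (K - beta * (a - m) ^+ 2).
  apply/funext => a; rewrite pi_fix hQ; congr pospart.
  by rewrite /K /beta /m; field; lra.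
have K_gt0 : 0 < K.
  by rewrite piE in pi_mass1; exact: pospart_quadratic_mass1_gt0 (ltW beta_gt0) pi_mass1.
have [r r_gt0 Kr] := exists_pmul_sqr K_gt0 beta_gt0.
have pi_cap : pi = parabola_cap beta m r.
  by rewrite piE; apply/funext => a; rewrite /parabola_cap /parabola Kr mulrBr.
have r3 : r ^+ 3 = 3 / (4 * beta).
  by apply: (parabola_cap_mass1 (m := m)) => //; rewrite -pi_cap.
have heightE : 3 / 2 * (alpha1 / (12 * mu)) `^ 3^-1 = K.
  have -> : alpha1 / (12 * mu) = (2 / 3 * K) ^+ 3.
    have -> : (2 / 3 * K) ^+ 3 = 8 / 27 * beta ^+ 3 * (r ^+ 3) ^+ 2.
      by rewrite Kr; field.
    by rewrite r3 /beta; field; lra.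
  by rewrite powR_expn_inv //; [field | rewrite mulr_ge0 ?ltW].
have radiusE : (12 * alpha1 ^+ 2 * mu) `^ 3^-1 = 2 * alpha1 * r.
  have -> : 12 * alpha1 ^+ 2 * mu = (2 * alpha1 * r) ^+ 3.
    rewrite exprMn r3 /beta; field; lra.
  by rewrite powR_expn_inv // !mulr_ge0 ?ltW.
split; first by rewrite heightE piE.
rewrite radiusE.
have -> : (alpha2 - 2 * alpha1 * r) / (2 * alpha1) = m - r.
  by rewrite /m; field; lra.
have -> : (alpha2 + 2 * alpha1 * r) / (2 * alpha1) = m + r.
  by rewrite /m; field; lra.
by rewrite pi_cap Wsupp_parabola_cap.
Qed.
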